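(* Let $(R,\mathfrak{m})$ be a local integral domain satisfying (R$_1$) whose integral closure $R'$ is a generalized Krull domain, and such that $P \cap R$ is a height one prime of $R$ for every height one prime $P$ of $R'$. Let $S$ be an integral overring of $R$ such that $R \subseteq S$ satisfies going-down. Then $S$ is local.
   Context: ''Local'' means having a unique maximal ideal; an overring of a domain $R$ is a ring between $R$ and its fraction field. A ring extension $A \subseteq B$ satisfies going-down if whenever $\mathfrak{p} \subset \mathfrak{q}$ are primes of $A$ and $Q$ is a prime of $B$ with $Q \cap A = \mathfrak{q}$, there is a prime $P \subseteq Q$ of $B$ with $P \cap A = \mathfrak{p}$. A ring satisfies (R$_1$) if its localization at every height one prime is a valuation domain. A domain $A$ is a generalized Krull domain if (1) $A = \bigcap A_{\mathfrak{p}}$ over all height one primes $\mathfrak{p}$, (2) every nonzero element lies in only finitely many height one primes, and (3) $A$ satisfies (R$_1$). *)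

(* Commutative algebra of subrings of a field K,
   with subsets represented as predicates K -> Prop. *)
From HB Require Import structures.
From mathcomp Require Import all_boot all_algebra.
Set Implicit Arguments. Unset Strict Implicit. Unset Printing Implicit Defensive.
Import GRing.Theory.
Local Open Scope ring_scope.

Section Defs.
Variable K : fieldType.

Definition subring (A : K -> Prop) : Prop :=
  [/\ A 0, A 1, (forall x y, A x -> A y -> A (x - y))
    & (forall x y, A x -> A y -> A (x * y))].

Definition frac_field_is (A : K -> Prop) : Prop :=
  forall x : K, exists a b, [/\ A a, A b, b != 0 & x = a / b].

Definition set_eq (P Q : K -> Prop) : Prop := forall x, P x <-> Q x.
Definition psubset (P Q : K -> Prop) : Prop := forall x, P x -> Q x.

Definition ideal (A I : K -> Prop) : Prop :=
  [/\ psubset I A, I 0, (forall x y, I x -> I y -> I (x + y))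
    & (forall a x, A a -> I x -> I (a * x))].

Definition prime_ideal (A P : K -> Prop) : Prop :=
  [/\ ideal A P, ~ P 1
    & forall a b, A a -> A b -> P (a * b) -> P a \/ P b].

Definition maximal_ideal (A M : K -> Prop) : Prop :=
  [/\ ideal A M, ~ M 1
    & forall J, ideal A J -> ~ J 1 -> psubset M J -> psubset J M].

Definition local_ring (A : K -> Prop) : Prop :=
  exists M, maximal_ideal A M /\ forall N, maximal_ideal A N -> set_eq N M.

Definition height_one (A P : K -> Prop) : Prop :=
  [/\ prime_ideal A P, (exists x, P x /\ x != 0)
    & forall Q, prime_ideal A Q -> psubset Q P ->
        (forall x, Q x -> x = 0) \/ set_eq Q P].

(* Localization A_P, viewed inside the fraction field K. *)
Definition localize (A P : K -> Prop) : K -> Prop :=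
  fun x => exists a s, [/\ A a, A s, ~ P s & x = a / s].

Definition valuation_domain (V : K -> Prop) : Prop :=
  subring V /\ forall x : K, x != 0 -> V x \/ V x^-1.

Definition R1 (A : K -> Prop) : Prop :=
  forall P, height_one A P -> valuation_domain (localize A P).

Definition generalized_Krull (A : K -> Prop) : Prop :=
  [/\ (forall x, A x <-> (forall P, height_one A P -> localize A P x)),
      (forall x, A x -> x != 0 -> exists (n : nat) (Qs : 'I_n -> K -> Prop),
          forall P, height_one A P -> P x -> exists i, set_eq P (Qs i))
    & R1 A].

Definition integral_over (A : K -> Prop) (x : K) : Prop :=
  exists p : {poly K}, [/\ p \is monic, (forall i, A p`_i) & root p x].

Definition integral_closure (A : K -> Prop) : K -> Prop := integral_over A.

Definition inter (P A : K -> Prop) : K -> Prop := fun x => P x /\ A x.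

Definition going_down (A B : K -> Prop) : Prop :=
  forall p q Q, prime_ideal A p -> prime_ideal A q -> psubset p q ->
    prime_ideal B Q -> set_eq (inter Q A) q ->
    exists P, [/\ prime_ideal B P, psubset P Q & set_eq (inter P A) p].

End Defs.

(* Every maximal ideal N of S contains the maximal ideal m of R, since S is
   integral over the local ring R.  If x lay in a maximal ideal N1 of S but not in
   another one N2, then x would avoid every height one prime P of R': going down
   from P ∩ R ⊆ m ⊆ N2 ∩ R gives a prime of S inside N2 lying over P ∩ R, and since
   R_(P ∩ R) is a valuation ring this prime contains P ∩ S.  As R' is the
   intersection of its localizations at height one primes, x⁻¹ ∈ R'; being integral
   over S, x⁻¹ lies in S, so x is a unit and cannot lie in N1. *)

From HB Require Import structures.
From mathcomp Require Import all_boot all_algebra.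
From mathcomp Require Import boolp classical_sets.
From mathcomp Require Import ring.
Set Implicit Arguments. Unset Strict Implicit. Unset Printing Implicit Defensive.
Import GRing.Theory.
Local Open Scope ring_scope.
Local Open Scope classical_set_scope.

Section SubringsOfField.
Variable K : fieldType.
Implicit Types (A B I J M N : K -> Prop) (x y a b : K).

Section Subring.
Variable A : K -> Prop.
Hypothesis hA : subring A.

Lemma subring0 : A 0. Proof. by case: hA. Qed.
Lemma subring1 : A 1. Proof. by case: hA. Qed.
Lemma subringB x y : A x -> A y -> A (x - y). Proof. by case: hA => _ _ AB _; apply: AB. Qed.
Lemma subringM x y : A x -> A y -> A (x * y). Proof. by case: hA => _ _ _ AM; apply: AM. Qed.
Lemma subringN x : A x -> A (- x). Proof. by rewrite -sub0r; apply/subringB/subring0. Qed.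
Lemma subringD x y : A x -> A y -> A (x + y).
Proof. by move=> Ax Ay; rewrite -[y]opprK; apply/subringB/subringN. Qed.
Lemma subringX x n : A x -> A (x ^+ n).
Proof.
by move=> Ax; elim: n => [|n IH]; rewrite ?expr0 ?exprS; [apply: subring1|apply: subringM].
Qed.

End Subring.

Section Ideal.
Variables A I : K -> Prop.
Hypothesis hI : ideal A I.

Lemma ideal_sub x : I x -> A x. Proof. by case: hI => IA _ _ _; apply: IA. Qed.
Lemma ideal0 : I 0. Proof. by case: hI. Qed.
Lemma idealD x y : I x -> I y -> I (x + y). Proof. by case: hI => _ _ ID _; apply: ID. Qed.
Lemma idealMl a x : A a -> I x -> I (a * x). Proof. by case: hI => _ _ _ IM; apply: IM. Qed.

End Ideal.

Definition zero_ideal : K -> Prop := fun x => x = 0.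

Definition ideal_adjoin A I b : K -> Prop :=
  fun y => exists n s, [/\ I n, A s & y = n + s * b].

Lemma zero_ideal_ideal A : subring A -> ideal A zero_ideal.
Proof.
by move=> hA; split=> [x ->|//|x y -> ->|a x _ ->]; rewrite ?addr0 ?mulr0 //; apply: subring0.
Qed.

Lemma ideal_adjoin_ideal A I b : subring A -> ideal A I -> A b -> ideal A (ideal_adjoin A I b).
Proof.
move=> hA hI Ab; split.
- move=> y [n [s [In As ->]]].
  by apply: subringD (ideal_sub hI In) (subringM hA As Ab).
- by exists 0, 0; rewrite mul0r addr0; split; [apply: ideal0 hI|apply: subring0|].
- move=> _ _ [n1 [s1 [In1 As1 ->]]] [n2 [s2 [In2 As2 ->]]].
  exists (n1 + n2), (s1 + s2); rewrite mulrDl addrACA.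
  by split => //; [apply: (idealD hI)|apply: (subringD hA)].
- move=> a _ Aa [n [s [In As ->]]].
  exists (a * n), (a * s); rewrite mulrDr mulrA.
  by split => //; [apply: (idealMl hI)|apply: (subringM hA)].
Qed.

Lemma ideal_adjoin_subl A I b : subring A -> psubset I (ideal_adjoin A I b).
Proof. by move=> hA x Ix; exists x, 0; rewrite mul0r addr0; split => //; apply: subring0. Qed.

Lemma ideal_adjoin_mem A I b : subring A -> ideal A I -> ideal_adjoin A I b b.
Proof.
by move=> hA hI; exists 0, 1; rewrite mul1r add0r; split; [apply: ideal0 hI|apply: subring1|].
Qed.

Lemma maximal_adjoin_one A M b : subring A -> maximal_ideal A M -> A b -> ~ M b ->
  exists n s, [/\ M n, A s & 1 = n + s * b].
Proof.
move=> hA [hM _ Mmax] Ab nMb; apply: contrapT => nJ1; apply: nMb.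
apply: (Mmax _ (ideal_adjoin_ideal hA hM Ab) nJ1); first exact: ideal_adjoin_subl.
exact: ideal_adjoin_mem.
Qed.

Lemma maximal_ideal_prime A M : subring A -> maximal_ideal A M -> prime_ideal A M.
Proof.
move=> hA hM; have [hMi nM1 _] := hM; split => // a b Aa Ab Mab.
have [Ma|nMa] := pselect (M a); [by left|right].
have [n [s [Mn As E]]] := maximal_adjoin_one hA hM Aa nMa.
have -> : b = b * n + s * (a * b) by rewrite -[LHS]mulr1 E; ring.
by apply: (idealD hMi); apply: (idealMl hMi).
Qed.

Lemma bigcup_chain_ideal A (F : set (set K)) J0 x0 :
  (forall J x, F J -> J x -> ideal A J /\ ~ J 1) -> total_on F subset -> F J0 -> J0 x0 ->
  ideal A (\bigcup_(J in F) J) /\ ~ (\bigcup_(J in F) J) 1.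
Proof.
move=> FP Ftot FJ0 J0x0; split; last by move=> [J FJ J1]; case: (FP J 1 FJ J1).
have hF J x : F J -> J x -> ideal A J by move=> FJ Jx; case: (FP J x FJ Jx).
split.
- by move=> x [J FJ Jx]; exact: (ideal_sub (hF J x FJ Jx) Jx).
- by exists J0 => //; exact: (ideal0 (hF J0 x0 FJ0 J0x0)).
- move=> x y [J1 FJ1 J1x] [J2 FJ2 J2y].
  have [sub12|sub21] := Ftot J1 J2 FJ1 FJ2.
  + by exists J2 => //; apply: (idealD (hF J2 y FJ2 J2y)) => //; apply: sub12.
  + by exists J1 => //; apply: (idealD (hF J1 x FJ1 J1x)) => //; apply: sub21.
- by move=> a x Aa [J FJ Jx]; exists J => //; apply: (idealMl (hF J x FJ Jx)).
Qed.

Lemma maximal_ideal_exists A I : subring A -> ideal A I -> ~ I 1 ->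
  exists2 M, maximal_ideal A M & psubset I M.
Proof.
move=> hA hI nI1.
(* [set0] is admitted only as the union of the empty chain. *)
pose P J := J = set0 \/ [/\ ideal A J, ~ J 1 & psubset I J].
have chainP (F : set (set K)) : F `<=` P -> total_on F subset -> P (\bigcup_(J in F) J).
  move=> FP Ftot.
  have FP' J x : F J -> J x -> [/\ ideal A J, ~ J 1 & psubset I J].
    by move=> FJ Jx; case: (FP J FJ) => // E; rewrite E in Jx.
  have [[J0 FJ0 [x0 J0x0]]|Fempty] := pselect (exists2 J, F J & exists x, J x).
    have [hU nU1] : ideal A (\bigcup_(J in F) J) /\ ~ (\bigcup_(J in F) J) 1.
      by apply: (bigcup_chain_ideal _ Ftot FJ0 J0x0) => J x FJ Jx; case: (FP' J x FJ Jx).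
    by right; split => // x Ix; exists J0 => //; case: (FP' J0 x0 FJ0 J0x0) => _ _; apply.
  by left; apply/seteqP; split => x // [J FJ Jx]; apply: Fempty; exists J => //; exists x.
have [M [PM Mmax]] := Zorn_bigcup chainP.
case: PM => [M0|[hMi nM1 IM]].
  exfalso; apply: (Mmax I); last by right; split.
  by rewrite M0; split => // sub; apply: (sub 0 (ideal0 hI)).
exists M => //; split => // J hJ nJ1 MJ x Jx; apply: contrapT => nMx.
by apply: (Mmax J); [split => // sub; apply: nMx (sub x Jx) | right; split => // y /IM /MJ].
Qed.

Section LocalRing.
Variables A M : K -> Prop.
Hypothesis hA : subring A.
Hypothesis hU : forall N, maximal_ideal A N -> set_eq N M.

Lemma local_ideal_sub J : ideal A J -> ~ J 1 -> psubset J M.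
Proof.
by move=> hJ nJ1 x Jx; have [N hN JN] := maximal_ideal_exists hA hJ nJ1; apply/(hU hN)/JN.
Qed.

Lemma local_unit a : A a -> ~ M a -> exists2 c, A c & c * a = 1.
Proof.
move=> Aa nMa; have hJ := ideal_adjoin_ideal hA (zero_ideal_ideal hA) Aa.
have [[n [c [-> Ac E]]]|nJ1] := pselect (ideal_adjoin A zero_ideal a 1).
  by exists c; rewrite // E add0r.
by exfalso; apply/nMa/(local_ideal_sub hJ nJ1)/ideal_adjoin_mem/zero_ideal_ideal.
Qed.

End LocalRing.

Lemma prime_ideal_inter A B Q : subring A -> psubset A B -> prime_ideal B Q ->
  prime_ideal A (inter Q A).
Proof.
move=> hA AB [hQ nQ1 Qprime]; split.
- split.
  + by move=> x [].
  + by split; [apply: ideal0 hQ|apply: subring0].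
  + by move=> x y [Qx Ax] [Qy Ay]; split; [apply: (idealD hQ)|apply: (subringD hA)].
  + by move=> a x Aa [Qx Ax]; split; [apply: (idealMl hQ) => //; apply: AB|apply: (subringM hA)].
- by case.
- move=> a b Aa Ab [Qab _].
  by case: (Qprime a b (AB a Aa) (AB b Ab) Qab) => ?; [left|right].
Qed.

Lemma ideal_one_subX A N y n : subring A -> ideal A N -> A y -> N (1 - y) -> N (1 - y ^+ n).
Proof.
move=> hA hN Ay Ny; elim: n => [|n IH]; first by rewrite expr0 subrr; apply: ideal0 hN.
have -> : 1 - y ^+ n.+1 = (1 - y ^+ n) + y ^+ n * (1 - y) by rewrite exprS; ring.
by apply: (idealD hN) => //; apply: (idealMl hN) => //; apply: subringX.
Qed.

(* [q(t) = 0] gives [Σ q_i b^(d-i) (t b)^i = b^d q(t) = 0] with [d + 1 = size q],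
   and [Σ q_i b^(d-i) = 1 + b c] because [q] is monic. *)
Lemma monic_root_one_add_mul A (q : {poly K}) t b :
  subring A -> q \is monic -> (forall i, A q`_i) -> root q t -> A b ->
  exists2 c, A c &
    1 + b * c = \sum_(i < size q) q`_i * b ^+ ((size q).-1 - i) * (1 - (t * b) ^+ i).
Proof.
move=> hA mq Aq rq Ab.
have homog : \sum_(i < size q) q`_i * b ^+ ((size q).-1 - i) * (t * b) ^+ i
    = b ^+ (size q).-1 * q.[t].
  rewrite horner_coef mulr_sumr; apply: eq_bigr => i _.
  have hi : (i <= (size q).-1)%N by rewrite -ltnS (ltn_predK (ltn_ord i)).
  by rewrite -[in RHS](subnK hi) exprD exprMn; ring.
have [c Ac Ec] : exists2 c, A c & \sum_(i < size q) q`_i * b ^+ ((size q).-1 - i) = 1 + b * c.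
  have : (0 < size q)%N by rewrite size_poly_gt0 monic_neq0.
  case Eq: (size q) => [//|k] _ /=.
  exists (\sum_(i < k) q`_i * b ^+ (k.-1 - i)).
    apply: (big_ind A) => [|x y|i _]; first exact: subring0.
      exact: subringD.
    exact: (subringM hA (Aq i) (subringX hA _ Ab)).
  have lead1 : q`_k = 1 by move/monicP: mq; rewrite /lead_coef Eq.
  rewrite big_ord_recr /= subnn expr0 mulr1 lead1 addrC mulr_sumr; congr (_ + _).
  apply: eq_bigr => i _; rewrite mulrCA -exprS; congr (_ * _ ^+ _).
  by case: k i {Eq lead1} => [[]//|k] i; rewrite subSn // -ltnS.
exists c => //; under eq_bigr do rewrite mulrBr mulr1.
by rewrite sumrB homog (rootP rq) mulr0 subr0 Ec.
Qed.

Lemma integral_inv_mem A B x : subring B -> psubset A B -> B x -> x != 0 ->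
  integral_over A x^-1 -> B x^-1.
Proof.
move=> hB AB Bx x0 [q [mq Aq rq]].
have [c Bc Ec] := monic_root_one_add_mul hB mq (fun i => AB _ (Aq i)) rq Bx.
move: Ec; under eq_bigr do rewrite mulVf // expr1n subrr mulr0.
rewrite big1 // => /eqP; rewrite addr_eq0 => /eqP Exc.
have -> : x^-1 = - c by apply: (mulfI x0); rewrite mulfV // mulrN; exact: Exc.
exact: subringN.
Qed.

Lemma valuation_ideal_mul A B P x : subring A -> psubset A B -> ideal B P ->
  valuation_domain (localize A (inter P A)) -> P x -> x != 0 ->
  exists s, [/\ A s, ~ inter P A s & inter P A (x * s)].
Proof.
move=> hA AB hP [_ Vval] Px x0.
have s0 s : ~ inter P A s -> s != 0.
  by move=> nps; apply/eqP => s0; apply: nps; rewrite s0; split; [apply: ideal0 hP|apply: subring0].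
have [[a [s [Aa As nps Ex]]]|[a [s [Aa As nps Ex]]]] := Vval x x0; have ns0 := s0 s nps.
  exists s; split => //; split; first by rewrite mulrC; apply: (idealMl hP (AB s As) Px).
  by rewrite Ex mulfVK.
exfalso; apply: nps; split => //.
have -> : s = a * x by rewrite -[s]mulr1 -(mulVf x0) Ex mulrA mulrCA mulfV // mulr1.
exact: (idealMl hP (AB a Aa) Px).
Qed.

End SubringsOfField.

Section IntegralOverLocal.
Variable K : fieldType.
Variables R S M : K -> Prop.
Hypotheses (hR : subring R) (hS : subring S) (RS : psubset R S).
Hypothesis SR' : psubset S (integral_closure R).
Hypotheses (hM : maximal_ideal R M) (hU : forall N, maximal_ideal R N -> set_eq N M).

(* If [b] in [M] avoided [N], then [1 - t b] in [N] for some [t] in [S]; an integral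
   equation of [t] turns this into a unit [1 + b c] of [R] lying in [N]. *)
Lemma maximal_ideal_over_local N : maximal_ideal S N -> psubset M N.
Proof.
move=> hN b Mb; apply: contrapT => nNb.
have [hNi nN1 _] := hN; have [hMi nM1 _] := hM.
have Rb := ideal_sub hMi Mb.
have [n [t [Nn St E]]] := maximal_adjoin_one hS hN (RS Rb) nNb.
have [q [mq Rq rq]] := SR' St.
have [c Rc Ec] := monic_root_one_add_mul hR mq Rq rq Rb.
have Nu : N (1 + b * c).
  rewrite Ec; apply: (big_ind N) => [|x y|i _]; first exact: ideal0 hNi.
    exact: (idealD hNi).
  apply: (idealMl hNi); first exact: RS (subringM hR (Rq i) (subringX hR _ Rb)).
  apply: (ideal_one_subX _ hS hNi); first exact: (subringM hS St (RS Rb)).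
  by rewrite E addrK.
have nMu : ~ M (1 + b * c).
  move=> Mu; apply: nM1; have -> : 1 = (1 + b * c) + (- c) * b by ring.
  exact: (idealD hMi Mu (idealMl hMi (subringN hR Rc) Mb)).
have Ru : R (1 + b * c) by apply: (subringD hR (subring1 hR) (subringM hR Rb Rc)).
have [v Rv Ev] := local_unit hR hU Ru nMu.
by apply: nN1; rewrite -Ev; apply: (idealMl hNi (RS Rv) Nu).
Qed.

Hypothesis hR1 : R1 R.
Hypothesis height_one_inter : forall P,
  height_one (integral_closure R) P -> height_one R (inter P R).
Hypothesis hGD : going_down R S.

Lemma sub_integral_closure : psubset R (integral_closure R).
Proof. by move=> x /RS /SR'. Qed.

Lemma height_one_sub_maximal N P x : maximal_ideal S N ->
  height_one (integral_closure R) P -> P x -> S x -> N x.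
Proof.
move=> hN hP Px Sx; have [hNi _ _] := hN.
have [[hPi _ _] _ _] := hP.
have hp := height_one_inter hP; have [hpp _ _] := hp; have [hpi np1 _] := hpp.
have [->|x0] := eqVneq x 0; first exact: ideal0 hNi.
have [s [Rs nps pxs]] := valuation_ideal_mul hR sub_integral_closure hPi (hR1 hp) Px x0.
have hNp := maximal_ideal_prime hS hN.
have pN : psubset (inter P R) (inter N R).
  move=> y py; split; last by case: py.
  exact/(maximal_ideal_over_local hN)/(local_ideal_sub hR hU hpi np1).
have [Q [[_ _ Qprime] QN QR]] :=
  hGD hpp (prime_ideal_inter hR RS hNp) pN hNp (fun y => conj id id).
have [|Qx|Qs] := Qprime x s Sx (RS Rs); first by case/QR: pxs.
  exact: QN.
by exfalso; apply: nps; apply/QR.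
Qed.

Hypothesis generalized_Krull_inter : forall x,
  integral_closure R x <-> (forall P, height_one (integral_closure R) P ->
                              localize (integral_closure R) P x).

Lemma maximal_ideal_sub N1 N2 : maximal_ideal S N1 -> maximal_ideal S N2 -> psubset N1 N2.
Proof.
move=> hN1 hN2 x N1x; apply: contrapT => nN2x.
have [hN1i nN1 _] := hN1; have [hN2i _ _] := hN2.
have Sx := ideal_sub hN1i N1x.
have x0 : x != 0 by apply/eqP => x0; apply: nN2x; rewrite x0; apply: ideal0 hN2i.
have R'x : integral_closure R x^-1.
  apply/generalized_Krull_inter => P hP; exists 1, x; split.
  - exact: sub_integral_closure (subring1 hR).
  - exact: SR'.
  - by move=> Px; apply: nN2x; apply: height_one_sub_maximal hN2 hP Px Sx.
  - by rewrite div1r.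
have Sx' := integral_inv_mem hS RS Sx x0 R'x.
by apply: nN1; rewrite -(mulVf x0); apply: (idealMl hN1i Sx' N1x).
Qed.

End IntegralOverLocal.

Theorem lemma4p2 (K : fieldType) (R S : K -> Prop) :
  subring R -> frac_field_is R -> local_ring R -> R1 R ->
  generalized_Krull (integral_closure R) ->
  (forall P, height_one (integral_closure R) P -> height_one R (inter P R)) ->
  subring S -> psubset R S -> psubset S (integral_closure R) ->
  going_down R S ->
  local_ring S.
Proof.
move=> hR _ [M [hM hU]] hR1 [GK _ _] hP hS RS SR' hGD.
have n01 : ~ zero_ideal (1 : K) by move/eqP; rewrite oner_eq0.
have [N hN _] := maximal_ideal_exists hS (zero_ideal_ideal hS) n01.
exists N; split => // N' hN' x.
by split; apply: (maximal_ideal_sub hR hS RS SR' hM hU hR1 hP hGD GK).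
Qed.
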